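(* Let $G$ be a maximal outerplanar graph (with a fixed outerplanar embedding) with reduced graph $\widetilde{G}$ and almost-dual graph $\widehat{G}$. Then the following three sets are in one-to-one correspondence: the sets of central vertices of the copies of $S_3$ in $G$; the triangles (cycles on three vertices) in $\widetilde{G}$; and the vertices of degree $3$ in $\widehat{G}$.
   Context: A graph is maximal outerplanar if it is outerplanar and adding any single new edge yields a non-outerplanar graph. $S_3$ is the graph with vertices $x_1,x_2,x_3,y_1,y_2,y_3$ and edges $\{x_1,x_2\},\{x_1,x_3\},\{x_2,x_3\},\{x_1,y_1\},\{x_2,y_1\},\{x_2,y_2\},\{x_3,y_2\},\{x_3,y_3\},\{x_1,y_3\}$; its central vertices are $x_1,x_2,x_3$ and its central edges are the three edges among them. A copy of $S_3$ in $G$ is an induced subgraph of $G$ isomorphic to $S_3$. The reduced graph $\widetilde{G}$ is obtained by coloring, for every copy of $S_3$ in $G$, its central vertices and central edges, and then deleting from $G$ all uncolored vertices and uncolored edges. The almost-dual graph $\widehat{G}$ (with respect to the fixed embedding) has one vertex for every inner face of $G$, two vertices being adjacent iff the corresponding inner faces share an edge of $G$. *)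

From mathcomp Require Import all_boot.
Set Implicit Arguments. Unset Strict Implicit. Unset Printing Implicit Defensive.

Section Graphs.
Variable T : finType.

Definition simple_graph (e : rel T) : Prop := symmetric e /\ irreflexive e.

Definition add_edge (e : rel T) (u v : T) : rel T :=
  fun x y => [|| e x y, (x == u) && (y == v) | (x == v) && (y == u)].

(* An outerplanar embedding: vertices placed at distinct positions p x on a
   circle (in this cyclic order), edges drawn as straight chords, no two chords
   crossing.  Chords {a,b} and {c,d} cross iff their endpoints interleave. *)
Definition cross (p : T -> nat) (a b c d : T) : bool :=
  [|| (p a < p c < p b) && (p b < p d),
      (p b < p c < p a) && (p a < p d),
      (p a < p d < p b) && (p b < p c) | (p b < p d < p a) && (p a < p c)].

Definition outerplanar_emb (e : rel T) (p : T -> nat) : Prop :=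
  injective p /\ forall a b c d, e a b -> e c d -> ~~ cross p a b c d.

Definition outerplanar (e : rel T) : Prop := exists p, outerplanar_emb e p.

Definition maximal_outerplanar (e : rel T) : Prop :=
  outerplanar e /\
  forall u v, u != v -> ~~ e u v -> ~ outerplanar (add_edge e u v).

(* S_3 on 'I_6 : 0,1,2 = x1,x2,x3 (central), 3,4,5 = y1,y2,y3. *)
Definition S3e (i j : nat) : bool :=
  [|| [&& i < 3, j < 3 & i != j],
      (i == 3) && ((j == 0) || (j == 1)),
      (i == 4) && ((j == 1) || (j == 2)) |
      (i == 5) && ((j == 2) || (j == 0))].

Definition S3adj (i j : 'I_6) : bool := S3e i j || S3e j i.

Definition copyS3 (e : rel T) (f : {ffun 'I_6 -> T}) : bool :=
  injectiveb f && [forall i, forall j, e (f i) (f j) == S3adj i j].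

Definition central_set (f : {ffun 'I_6 -> T}) : {set T} :=
  [set f i | i : 'I_6 & (i < 3)%N].

Definition central_sets (e : rel T) : {set {set T}} :=
  [set central_set f | f in [pred f | copyS3 e f]].

Definition colored_vertex (e : rel T) (v : T) : bool :=
  [exists f, copyS3 e f && [exists i : 'I_6, (i < 3)%N && (f i == v)]].

Definition colored_edge (e : rel T) (u v : T) : bool :=
  [exists f, copyS3 e f && [exists i : 'I_6, exists j : 'I_6,
     [&& (i < 3)%N, (j < 3)%N, i != j, f i == u & f j == v]]].

Definition reduced_vertices (e : rel T) : {set T} := [set v | colored_vertex e v].
Definition reduced_rel (e : rel T) : rel T :=
  fun u v => [&& colored_vertex e u, colored_vertex e v & colored_edge e u v].

Definition triangles (r : rel T) : {set {set T}} :=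
  [set X : {set T} | (#|X| == 3) && [forall u in X, forall v in X, (u != v) ==> r u v]].

(* u, v are cyclically consecutive among the vertices of F (in the circular order p). *)
Definition consec_lt (p : T -> nat) (F : {set T}) (u v : T) : bool :=
  (p u < p v) &&
  ([forall w in F, ~~ ((p u < p w) && (p w < p v))] ||
   [forall w in F, (p u <= p w) && (p w <= p v)]).

Definition consec (p : T -> nat) (F : {set T}) (u v : T) : bool :=
  consec_lt p F u v || consec_lt p F v u.

(* An inner (bounded) face of the convex chord drawing: a polygon on the vertex
   set F (|F| >= 3) whose sides (cyclically consecutive vertices of F) are edges
   of G and whose interior contains no chord (no edge between non-consecutive
   vertices of F). *)
Definition inner_face (e : rel T) (p : T -> nat) (F : {set T}) : bool :=
  (3 <= #|F|) &&
  [forall u in F, forall v in F, (u != v) ==> (e u v == consec p F u v)].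

Definition dual_adj (e : rel T) (p : T -> nat) (F1 F2 : {set T}) : bool :=
  (F1 != F2) &&
  [exists u, exists v, [&& u != v, e u v, u \in F1, v \in F1, u \in F2, v \in F2,
                         consec p F1 u v & consec p F2 u v]].

Definition almost_dual_vertices (e : rel T) (p : T -> nat) : {set {set T}} :=
  [set F | inner_face e p F].

Definition almost_dual_degree (e : rel T) (p : T -> nat) (F : {set T}) : nat :=
  #|[set F2 | inner_face e p F2 & dual_adj e p F F2]|.

Definition almost_dual_deg3 (e : rel T) (p : T -> nat) : {set {set T}} :=
  [set F | inner_face e p F & almost_dual_degree e p F == 3].

End Graphs.

(* All three sets coincide with the set of triangles of G whose sides are
   inner edges, i.e. lie on two triangles.  In an outerplanar drawing the two
   triangles on an edge uv lie on opposite sides of the chord uv, so no edge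
   lies on three triangles.  The central edges of a copy of S_3 are colored,
   and colored edges are inner: the third central vertex and the adjacent
   outer vertex of the copy are two common neighbours.  Conversely, for a
   triangle abc with inner sides, the apexes y1, y2, y3 of the second
   triangles on ab, bc, ca lie in the three arcs cut off by abc; a chord
   between two arcs, or from an arc to the opposite corner, would cross a side
   of abc, so {a, b, c, y1, y2, y3} induces S_3.  Finally, maximality forces
   every inner face to be a triangle, and a triangular face is adjacent in the
   almost-dual graph to exactly one face across each inner side and to none
   across the others. *)

From mathcomp Require Import all_boot zify.
Set Implicit Arguments. Unset Strict Implicit. Unset Printing Implicit Defensive.

Section Sets3.
Variable T : finType.
Implicit Types (A : {set T}) (a b c : T).

Lemma cards3E a b c : (#|[set a; b; c]| == 3) = [&& a != b, b != c & a != c].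
Proof.
have -> : #|[set a; b; c]| = #|[:: a; b; c]| by apply: eq_card => x; rewrite !inE orbA.
have -> : [&& a != b, b != c & a != c] = uniq [:: a; b; c].
  by rewrite /= !inE negb_or andbT; case: (a != b); case: (b != c); case: (a != c).
exact/eqP/card_uniqP.
Qed.

Lemma card3_set3 A a b c : #|A| = 3 -> a \in A -> b \in A -> c \in A ->
  a != b -> b != c -> a != c -> A = [set a; b; c].
Proof.
move=> A3 aA bA cA ab bc ac; apply/eqP; rewrite eq_sym eqEcard.
rewrite (eqP (_ : #|[set a; b; c]| == 3)) ?cards3E ?ab ?bc ?ac // A3 leqnn andbT.
by apply/subsetP => x; rewrite !inE -!orbA => /or3P[] /eqP ->.
Qed.

Lemma cards3P A :
  reflect (exists a b c, [/\ a != b, b != c, a != c & A = [set a; b; c]]) (#|A| == 3).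
Proof.
apply: (iffP eqP) => [A3|[a [b [c [ab bc ac ->]]]]]; last by apply/eqP; rewrite cards3E ab bc.
have /card_gt2P[a [b [c [[aA bA cA] [ab bc ca]]]]] : 2 < #|A| by rewrite A3.
by exists a, b, c; rewrite eq_sym in ca; split; last exact: card3_set3.
Qed.

Lemma set3C12 a b c : [set a; b; c] = [set b; a; c].
Proof. by apply/setP => x; rewrite !inE (orbC (x == a)). Qed.

Lemma set3C23 a b c : [set a; b; c] = [set a; c; b].
Proof. by apply/setP => x; rewrite !inE -!orbA (orbC (x == b)). Qed.

End Sets3.

Section Triangles.
Variables (T : finType) (r : rel T).

Lemma triangles_mono (r' : rel T) : subrel r r' -> triangles r \subset triangles r'.
Proof.
move=> rr'; apply/subsetP => X; rewrite !inE => /andP[-> /forall_inP X3] /=.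
apply/forall_inP => u uX; apply/forall_inP => v vX; apply/implyP => uv.
by apply: rr'; move/forall_inP/(_ v vX)/implyP/(_ uv): (X3 u uX).
Qed.

Hypothesis r_sym : symmetric r.

Lemma mem_triangles3 a b c : ([set a; b; c] \in triangles r) =
  [&& a != b, b != c & a != c] && [&& r a b, r b c & r a c].
Proof.
rewrite inE cards3E; case: (boolP [&& a != b, b != c & a != c]) => //= /and3P[ab bc ac].
apply/forall_inP/and3P => [R|[rab rbc rac] u uX].
  have R' u v : u \in [set a; b; c] -> v \in [set a; b; c] -> u != v -> r u v.
    by move=> uX vX uv; move/forall_inP/(_ v vX)/implyP/(_ uv): (R u uX).
  by split; apply: R'; rewrite ?inE ?eqxx ?orbT.
apply/forall_inP => v; move: uX; rewrite !inE -!orbA.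
by case/or3P=> /eqP-> /or3P[] /eqP->; apply/implyP; rewrite ?eqxx // => _; rewrite // r_sym.
Qed.

Lemma trianglesP X : reflect (exists a b c,
    X = [set a; b; c] /\ [&& a != b, b != c & a != c] && [&& r a b, r b c & r a c])
  (X \in triangles r).
Proof.
apply: (iffP idP) => [XT|[a [b [c [-> abc]]]]]; last by rewrite mem_triangles3.
have /cards3P[a [b [c [_ _ _ XE]]]] : #|X| == 3 by move: XT; rewrite inE => /andP[].
by exists a, b, c; rewrite -mem_triangles3 -XE.
Qed.

End Triangles.

Section CircularOrder.
Variables (T : finType) (p : T -> nat).
Implicit Types (F : {set T}) (a b c u v w x y z : T).

(* With the vertices placed on a circle in the order given by [p], the chord
   [ab] separates [x] from [y] (both distinct from [a] and [b]) iff exactly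
   one of them lies strictly between [a] and [b] in that order. *)
Definition between a b x := (p a < p x < p b) || (p b < p x < p a).
Definition separates a b x y := between a b x != between a b y.

Lemma separatesC a b x y : separates a b x y = separates b a x y.
Proof. by rewrite /separates /between orbC [X in _ != X]orbC. Qed.

Lemma separates_neq a b x y : separates a b x y -> x != y.
Proof. by apply: contraTneq => ->; rewrite /separates eqxx. Qed.

Lemma p_lt_neq x y : p x < p y -> x != y.
Proof. by apply: contraTneq => ->; rewrite ltnn. Qed.

Lemma ex_pmin (A : {pred T}) w :
  w \in A -> exists2 m, m \in A & forall x, x \in A -> p m <= p x.
Proof. by move=> wA; case: (@arg_minnP _ w [in A] p wA) => m mA mmin; exists m. Qed.

Lemma ex_pmax (A : {pred T}) w :
  w \in A -> exists2 m, m \in A & forall x, x \in A -> p x <= p m.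
Proof. by move=> wA; case: (@arg_maxnP _ w [in A] p wA) => m mA mmax; exists m. Qed.

Hypothesis p_inj : injective p.

Lemma separates_opposite_arcs a b c x y : a != b -> b != c -> a != c ->
  x != a -> x != b -> x != c -> separates a b c x -> separates b c a y -> separates b c x y.
Proof. by rewrite -!(inj_eq p_inj) /separates /between; lia. Qed.

Lemma leftmost3 F : 3 < #|F| -> exists a b c z,
  [/\ a \in F, b \in F, c \in F, z \in F &
   [/\ p a < p b, p b < p c, p c < p z &
       forall w, w \in F -> [|| p w == p a, p w == p b | p c <= p w]]].
Proof.
move=> F4; have /card_gt0P[x0 x0F] := ltnW (ltnW (ltnW F4)).
have [a aF amin] := ex_pmin x0F; rewrite (cardsD1 a) aF add1n ltnS in F4.
have /card_gt0P[x1 x1F] := ltnW (ltnW F4).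
have [b /setD1P[ba bF] bmin] := ex_pmin x1F.
rewrite (cardsD1 b) !inE ba bF add1n ltnS in F4.
have /card_gt0P[x2 x2F] := ltnW F4.
have [c /setD1P[cb /setD1P[ca cF]] cmin] := ex_pmin x2F.
rewrite (cardsD1 c) !inE cb ca cF add1n ltnS in F4.
have /card_gt0P[z /setD1P[zc /setD1P[zb /setD1P[za zF]]]] := F4.
exists a, b, c, z; split=> //; split.
- by rewrite ltn_neqAle (inj_eq p_inj) eq_sym ba amin.
- by rewrite ltn_neqAle (inj_eq p_inj) eq_sym cb bmin // !inE ca.
- by rewrite ltn_neqAle (inj_eq p_inj) eq_sym zc cmin // !inE zb za.
move=> w wF; rewrite !(inj_eq p_inj).
have [->|wa] := eqVneq w a; rewrite ?eqxx //.
have [->|wb] := eqVneq w b; rewrite ?eqxx ?orbT //.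
by rewrite cmin ?orbT // !inE wa wb.
Qed.

Lemma consec_lt_card3 F x y : #|F| = 3 -> x \in F -> y \in F -> p x < p y ->
  consec_lt p F x y.
Proof.
move=> F3 xF yF xy; rewrite /consec_lt xy /=.
have [/exists_inP[w wF /andP[xw wy]]|] := boolP [exists w in F, p x < p w < p y]; last first.
  by rewrite negb_exists_in => ->.
apply/orP; right; apply/forall_inP => z.
rewrite (card3_set3 F3 xF wF yF) ?p_lt_neq ?(ltn_trans xw wy) // !inE -!orbA.
by case/or3P => /eqP->; lia.
Qed.

Lemma consec_card3 F u v : #|F| = 3 -> u \in F -> v \in F -> u != v -> consec p F u v.
Proof.
move=> F3 uF vF; rewrite -(inj_eq p_inj) neq_ltn /consec => /orP[uv|vu].
  by rewrite consec_lt_card3.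
by rewrite (consec_lt_card3 F3 vF uF vu) orbT.
Qed.

End CircularOrder.

(* In a maximal outerplanar graph, the edges off the outer face are exactly
   those lying on two triangles. *)
Definition inner_edge (T : finType) (e : rel T) (u v : T) : bool :=
  e u v && [exists x, exists y, [&& x != y, e u x, e v x, e u y & e v y]].

Section CopiesOfS3.
Variables (T : finType) (e : rel T).
Hypotheses (e_sym : symmetric e) (e_irr : irreflexive e).

Lemma S3adj_central_edge (i j : 'I_6) : i < 3 -> j < 3 -> i != j ->
  S3adj i j /\ exists k l, [&& k != l, S3adj i k, S3adj j k, S3adj i l & S3adj j l].
Proof.
case: i j => [[|[|[|?]]] ?] [[|[|[|?]]] ?] //= _ _ _; split => //.
- by exists (@Ordinal 6 2 isT), (@Ordinal 6 3 isT).
- by exists (@Ordinal 6 1 isT), (@Ordinal 6 5 isT).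
- by exists (@Ordinal 6 2 isT), (@Ordinal 6 3 isT).
- by exists (@Ordinal 6 0 isT), (@Ordinal 6 4 isT).
- by exists (@Ordinal 6 1 isT), (@Ordinal 6 5 isT).
- by exists (@Ordinal 6 0 isT), (@Ordinal 6 4 isT).
Qed.

Lemma copyS3P (f : {ffun 'I_6 -> T}) :
  reflect (injective f /\ forall i j, e (f i) (f j) = S3adj i j) (copyS3 e f).
Proof.
apply: (iffP andP) => [[/injectiveP f_inj /forallP fe]|[f_inj fe]].
  by split=> // i j; apply/eqP/(forallP (fe i)).
by split; [apply/injectiveP | apply/forallP => i; apply/forallP => j; rewrite fe].
Qed.

Lemma central_setE (f : {ffun 'I_6 -> T}) :
  central_set f = [set f (@Ordinal 6 0 isT); f (@Ordinal 6 1 isT); f (@Ordinal 6 2 isT)].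
Proof.
apply/setP => x; rewrite !inE -!orbA; apply/imsetP/or3P => [[i]|].
  rewrite inE => i3 ->.
  by case: i i3 => [[|[|[|i]]] hi] //= _; [apply: Or31 | apply: Or32 | apply: Or33];
    apply/eqP; congr (f _); apply: val_inj.
by case=> /eqP->; [exists (@Ordinal 6 0 isT) | exists (@Ordinal 6 1 isT) |
  exists (@Ordinal 6 2 isT)]; rewrite ?inE.
Qed.

Lemma copyS3_of_vertices a b c y1 y2 y3 : uniq [:: a; b; c; y1; y2; y3] ->
  [&& e a b, e b c & e a c] -> [&& e a y1, e b y1 & ~~ e c y1] ->
  [&& e b y2, e c y2 & ~~ e a y2] -> [&& e a y3, e c y3 & ~~ e b y3] ->
  ~~ [|| e y1 y2, e y1 y3 | e y2 y3] ->
  exists2 f, copyS3 e f & central_set f = [set a; b; c].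
Proof.
move=> uniq_abcy /and3P[eab ebc eac] /and3P[ay1 by1 /negbTE ncy1].
move=> /and3P[by2 cy2 /negbTE nay2] /and3P[ay3 cy3 /negbTE nby3].
rewrite !negb_or => /and3P[/negbTE n12 /negbTE n13 /negbTE n23].
pose f := [ffun i : 'I_6 => nth a [:: a; b; c; y1; y2; y3] i].
exists f; last by rewrite central_setE /f !ffunE.
apply/copyS3P; split=> [i j|i j]; rewrite /f !ffunE.
  by move/eqP; rewrite nth_uniq // => /eqP/val_inj.
case: i j => [[|[|[|[|[|[|i]]]]]] hi] [[|[|[|[|[|[|j]]]]]] hj] //=; rewrite /S3adj /S3e /=;
by rewrite ?e_irr ?eab ?ebc ?eac ?ay1 ?by1 ?by2 ?cy2 ?ay3 ?cy3 ?ncy1 ?nay2 ?nby3 ?n12 ?n13 ?n23 //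
  e_sym ?eab ?ebc ?eac ?ay1 ?by1 ?by2 ?cy2 ?ay3 ?cy3 ?ncy1 ?nay2 ?nby3 ?n12 ?n13 ?n23.
Qed.

Lemma copy_central_inner (f : {ffun 'I_6 -> T}) (i j : 'I_6) :
  copyS3 e f -> i < 3 -> j < 3 -> i != j -> inner_edge e (f i) (f j).
Proof.
case/copyS3P => f_inj fe i3 j3 ij.
have [adj_ij [k [l /and5P[kl ik jk il jl]]]] := S3adj_central_edge i3 j3 ij.
rewrite /inner_edge fe adj_ij; apply/existsP; exists (f k); apply/existsP; exists (f l).
by rewrite (inj_eq f_inj) kl !fe ik jk il jl.
Qed.

Lemma colored_edge_inner u v : colored_edge e u v -> inner_edge e u v.
Proof.
case/existsP=> f /andP[fcopy /existsP[i /existsP[j /and5P[i3 j3 ij /eqP<- /eqP<-]]]].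
exact: copy_central_inner.
Qed.

Lemma reduced_rel_sym : symmetric (reduced_rel e).
Proof.
suff colored_sym u v : colored_edge e u v -> colored_edge e v u.
  by move=> u v; rewrite /reduced_rel andbCA; apply/and3P/and3P => -[-> -> /colored_sym].
case/existsP=> f /andP[fcopy /existsP[i /existsP[j /and5P[i3 j3 ij fi fj]]]].
apply/existsP; exists f; rewrite fcopy; apply/existsP; exists j; apply/existsP; exists i.
by rewrite i3 j3 eq_sym ij fi fj.
Qed.

Lemma copy_central_reduced (f : {ffun 'I_6 -> T}) (i j : 'I_6) :
  copyS3 e f -> i < 3 -> j < 3 -> i != j -> reduced_rel e (f i) (f j).
Proof.
move=> fcopy i3 j3 ij; apply/and3P; split; apply/existsP; exists f; rewrite fcopy /=.
- by apply/existsP; exists i; rewrite i3 eqxx.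
- by apply/existsP; exists j; rewrite j3 eqxx.
- by apply/existsP; exists i; apply/existsP; exists j; rewrite i3 j3 ij !eqxx.
Qed.

End CopiesOfS3.

Section MaximalOuterplanar.
Variables (T : finType) (e : rel T) (p : T -> nat).
Hypotheses (e_sym : symmetric e) (e_irr : irreflexive e) (p_inj : injective p).
Hypothesis p_noncross : forall a b c d, e a b -> e c d -> ~~ cross p a b c d.
Implicit Types (F X Y : {set T}) (a b c d f u v w x y z : T).

Lemma edge_neq u v : e u v -> u != v.
Proof. by apply: contraTneq => ->; rewrite e_irr. Qed.

Lemma chord_nested a b c d : e a b -> e c d -> p a < p c < p b -> p a <= p d <= p b.
Proof.
by move=> ab cd; have := p_noncross ab cd; have := p_noncross cd ab; rewrite /cross; lia.
Qed.

Lemma separated_nonedge u v x y : e u v -> x != u -> x != v -> y != u -> y != v ->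
  separates p u v x y -> ~~ e x y.
Proof.
move=> uv + + + + sep; rewrite -!(inj_eq p_inj) => xu xv yu yv; apply/negP => xy.
by have := p_noncross uv xy; have := p_noncross xy uv; move: sep;
  rewrite /separates /between /cross; lia.
Qed.

Lemma common_neighbours_separated u v x y : e u v -> e u x -> e v x -> e u y -> e v y ->
  x != y -> separates p u v x y.
Proof.
move=> uv ux vx uy vy; have := edge_neq uv; have := edge_neq ux; have := edge_neq vx.
have := edge_neq uy; have := edge_neq vy; rewrite -!(inj_eq p_inj).
have := p_noncross ux vy; have := p_noncross vy ux.
have := p_noncross vx uy; have := p_noncross uy vx.
by rewrite /separates /between /cross; lia.
Qed.

Lemma no_three_common_neighbours u v x y z : e u v ->
  e u x -> e v x -> e u y -> e v y -> e u z -> e v z -> x != y -> y != z -> x != z -> False.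
Proof.
move=> uv ux vx uy vy uz vz xy yz xz.
have := common_neighbours_separated uv ux vx uy vy xy.
have := common_neighbours_separated uv uy vy uz vz yz.
have := common_neighbours_separated uv ux vx uz vz xz.
by rewrite /separates; case: (between p u v x); case: (between p u v y); case: (between p u v z).
Qed.

Lemma inner_edge_sym : symmetric (inner_edge e).
Proof.
move=> u v; apply/idP/idP => /andP[uv /existsP[x /existsP[y /and5P[xy ux vx uy vy]]]];
  rewrite /inner_edge e_sym uv; apply/existsP; exists x; apply/existsP; exists y;
  by rewrite xy ux vx uy vy.
Qed.

Lemma inner_edge_other u v t : inner_edge e u v -> exists w, [/\ w != t, e u w & e v w].
Proof.
case/andP=> _ /existsP[x /existsP[y /and5P[xy ux vx uy vy]]].
by case: (eqVneq x t) => [xt|]; [exists y; rewrite -xt eq_sym | exists x].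
Qed.

Lemma inner_triangle_copy a b c :
  inner_edge e a b -> inner_edge e b c -> inner_edge e a c ->
  exists2 f, copyS3 e f & central_set f = [set a; b; c].
Proof.
move=> iab ibc iac.
have [eab ebc eac] : [/\ e a b, e b c & e a c].
  by rewrite (andP iab).1 (andP ibc).1 (andP iac).1.
have [eba ecb eca] : [/\ e b a, e c b & e c a] by rewrite !(e_sym _ a) (e_sym c b).
have [y1 [y1c ay1 by1]] := inner_edge_other c iab.
have [y2 [y2a by2 cy2]] := inner_edge_other a ibc.
have [y3 [y3b ay3 cy3]] := inner_edge_other b iac.
have ab := edge_neq eab; have bc := edge_neq ebc; have ac := edge_neq eac.
have [ba cb ca] : [/\ b != a, c != b & c != a] by rewrite !(eq_sym c) eq_sym.
have [y1a y1b] : y1 != a /\ y1 != b by rewrite !(eq_sym y1) !edge_neq.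
have [y2b y2c] : y2 != b /\ y2 != c by rewrite !(eq_sym y2) !edge_neq.
have [y3a y3c] : y3 != a /\ y3 != c by rewrite !(eq_sym y3) !edge_neq.
have s1 : separates p a b c y1 by apply: common_neighbours_separated; rewrite // eq_sym.
have s2 : separates p b c a y2 by apply: common_neighbours_separated; rewrite // eq_sym.
have s3 : separates p c a b y3.
  by rewrite separatesC; apply: common_neighbours_separated; rewrite // eq_sym.
have s12 := separates_opposite_arcs p_inj ab bc ac y1a y1b y1c s1 s2.
have s23 := separates_opposite_arcs p_inj bc ca ba y2b y2c y2a s2 s3.
have s31 := separates_opposite_arcs p_inj ca ab cb y3c y3a y3b s3 s1.
apply: (@copyS3_of_vertices _ _ e_sym e_irr a b c y1 y2 y3).
- have := separates_neq s12; have := separates_neq s23; have := separates_neq s31.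
  rewrite /= !inE !negb_or => *; do !(apply/andP; split) => //; exact/eqP/nesym/eqP.
- by rewrite eab ebc eac.
- by rewrite ay1 by1 (separated_nonedge eab _ _ _ _ s1).
- by rewrite by2 cy2 (separated_nonedge ebc _ _ _ _ s2).
- by rewrite ay3 cy3 (separated_nonedge eca _ _ _ _ s3).
rewrite !negb_or (e_sym y1 y3); apply/and3P; split;
  by [apply: (separated_nonedge ebc) | apply: (separated_nonedge eab) |
      apply: (separated_nonedge eca)].
Qed.

Lemma central_sets_sub : central_sets e \subset triangles (reduced_rel e).
Proof.
apply/subsetP => X /imsetP[f]; rewrite inE => fcopy ->.
have /copyS3P[f_inj _] := fcopy.
rewrite central_setE mem_triangles3; last exact: reduced_rel_sym.
by rewrite !(inj_eq f_inj) !copy_central_reduced.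
Qed.

Lemma reduced_triangles_sub : triangles (reduced_rel e) \subset triangles (inner_edge e).
Proof. by apply: triangles_mono => u v /and3P[_ _ /colored_edge_inner]. Qed.

Lemma inner_triangles_sub : triangles (inner_edge e) \subset central_sets e.
Proof.
apply/subsetP => X /(trianglesP inner_edge_sym)[a [b [c [-> /andP[_ /and3P[iab ibc iac]]]]]].
have [f fcopy <-] := inner_triangle_copy iab ibc iac.
by apply/imsetP; exists f; rewrite ?inE.
Qed.

Lemma central_setsE : central_sets e = triangles (inner_edge e).
Proof.
apply/eqP; rewrite eqEsubset inner_triangles_sub andbT.
exact: subset_trans central_sets_sub reduced_triangles_sub.
Qed.

Lemma reduced_trianglesE : triangles (reduced_rel e) = triangles (inner_edge e).
Proof.
apply/eqP; rewrite eqEsubset reduced_triangles_sub.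
exact: subset_trans inner_triangles_sub central_sets_sub.
Qed.

Hypothesis e_max : forall u v, u != v -> ~~ e u v -> ~ outerplanar (add_edge e u v).

Lemma nonedge_crossed u v : u != v -> ~~ e u v -> p u < p v ->
  exists c d, [/\ e c d, p u < p c < p v & (p d < p u) || (p v < p d)].
Proof.
move=> uv nuv ltuv.
have [/existsP[c /existsP[d /and3P[cd cuv duv]]]|] :=
  boolP [exists c, exists d, [&& e c d, p u < p c < p v & (p d < p u) || (p v < p d)]].
  by exists c, d.
rewrite negb_exists => /forallP nocross; exfalso; apply: (e_max uv nuv).
have {}nocross c d : e c d ->
    ~~ [&& p u < p c < p v & (p d < p u) || (p v < p d)] /\
    ~~ [&& p u < p d < p v & (p c < p u) || (p v < p c)].
  have nc x y : ~~ [&& e x y, p u < p x < p v & (p y < p u) || (p v < p y)].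
    by move: (nocross x); rewrite negb_exists => /forallP.
  by move=> cd; split; [have := nc c d | have := nc d c]; rewrite ?(e_sym d) cd.
exists p; split=> // a b c d.
rewrite /add_edge => /or3P[ab|/andP[/eqP-> /eqP->]|/andP[/eqP-> /eqP->]]
  /or3P[cd|/andP[/eqP-> /eqP->]|/andP[/eqP-> /eqP->]]; first exact: p_noncross.
all: try have := nocross _ _ ab; try have := nocross _ _ cd.
all: by rewrite /cross; lia.
Qed.

Lemma inner_face_edgeE F u v : inner_face e p F -> u \in F -> v \in F -> u != v ->
  e u v = consec p F u v.
Proof.
case/andP=> _ /forall_inP hF uF vF uv.
by apply/eqP; move/forall_inP/(_ v vF)/implyP/(_ uv): (hF u uF).
Qed.

Lemma inner_face_gap_edge F u v : inner_face e p F -> u \in F -> v \in F -> p u < p v ->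
  (forall w, w \in F -> ~~ (p u < p w < p v)) -> e u v.
Proof.
move=> hF uF vF uv gap; rewrite (inner_face_edgeE hF uF vF); last first.
  by rewrite -(inj_eq p_inj) neq_ltn uv.
by rewrite /consec /consec_lt uv (_ : [forall w in F, _] = true) //; apply/forall_inP.
Qed.

Lemma inner_face_gap F d u v : inner_face e p F -> d \notin F -> u \in F -> v \in F ->
  p u < p d -> p d < p v -> exists f f', [/\ e f f', p u <= p f < p d & p d < p f' <= p v].
Proof.
move=> hF dF uF vF ud dv.
have uA : u \in [pred w in F | p w < p d] by rewrite inE uF.
have vB : v \in [pred w in F | p d < p w] by rewrite inE vF.
have [f /andP[fF fd] fmax] := ex_pmax p uA.
have [f' /andP[f'F df'] f'min] := ex_pmin p vB.
exists f, f'; split; first 1 last.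
- by rewrite fd andbT; apply: fmax; rewrite inE uF.
- by rewrite df' /=; apply: f'min; rewrite inE vF.
apply: inner_face_gap_edge hF fF f'F _ _ => [|w wF]; first lia.
have : w != d by apply: contraNneq dF => <-.
rewrite -(inj_eq p_inj) neq_ltn => /orP[wd|dw].
  by have := fmax w; rewrite inE wF wd; lia.
by have := f'min w; rewrite inE wF dw; lia.
Qed.

Lemma face_separated_nonedge F u v w w' : inner_face e p F ->
  u \in F -> v \in F -> w \in F -> w' \in F ->
  p u < p w < p v -> (p w' < p u) || (p v < p w') -> ~~ e u v.
Proof.
move=> hF uF vF wF w'F uwv w'uv.
have uv : u != v.
  by rewrite -(inj_eq p_inj) neq_ltn; case/andP: uwv => uw /(ltn_trans uw) ->.
rewrite (inner_face_edgeE hF uF vF uv) /consec /consec_lt negb_or.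
apply/andP; split; apply/negP => /andP[lt /orP[] /forall_inP H] //;
  by [have := H w wF; lia | have := H w' w'F; lia | lia].
Qed.

Lemma chord_through_apex a b c m x d : e a b -> e b c -> e a m ->
  p a < p b -> p b < p c -> p c < p m -> e x d -> p a < p x < p c ->
  (p d < p a) || (p c < p d) -> x = b /\ p c < p d <= p m.
Proof.
move=> ab bc am pab pbc cm xd axc dac.
have /p_inj xb : p x = p b.
  by have := chord_nested ab xd; have := chord_nested bc xd; lia.
by subst x; split=> //; have := chord_nested am xd; lia.
Qed.

(* Let a, b, c be the three leftmost vertices of a face F with a fourth vertex
   z.  Maximality yields an edge crossing the missing chord ac; it must start
   at b and end in a gap of F right of c, where it crosses a side of F. *)
Lemma inner_face_card F : inner_face e p F -> #|F| = 3.
Proof.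
move=> hF; have F3 : 2 < #|F| by case/andP: hF.
apply/eqP; rewrite eqn_leq F3 andbT leqNgt; apply/negP => /(leftmost3 p_inj)[a [b [c [z]]]].
case=> aF bF cF zF [ab bc cz left3].
have amin w : w \in F -> p a <= p w by move/left3; lia.
have eab : e a b by apply: (inner_face_gap_edge hF aF bF ab) => w /left3; lia.
have ebc : e b c by apply: (inner_face_gap_edge hF bF cF bc) => w /left3; lia.
have ac := ltn_trans ab bc.
have nac : ~~ e a c by apply: (face_separated_nonedge hF aF cF bF zF); rewrite ?ab ?bc ?cz ?orbT.
have [m mF mmax] := ex_pmax p aF.
have cm := leq_trans cz (mmax z zF).
have am := ltn_trans ac cm.
have eam : e a m.
  rewrite (inner_face_edgeE hF aF mF (p_lt_neq am)) /consec /consec_lt am /=.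
  by apply/orP; left; apply/orP; right; apply/forall_inP => w wF; rewrite amin ?mmax.
have [x [d [xd axc dac]]] := nonedge_crossed (p_lt_neq ac) nac ac.
have [xb /andP[cd dm]] := chord_through_apex eab ebc eam ab bc cm xd axc dac; subst x.
have dF : d \notin F.
  apply: (contraL _ xd) => dF.
  by apply: (face_separated_nonedge hF bF dF cF aF); rewrite ?bc ?cd ?ab.
have dm' : p d < p m by rewrite ltn_neqAle dm andbT (inj_eq p_inj); apply: contraNneq dF => ->.
have [f [f' [ff' /andP[cf fd] /andP[df' _]]]] := inner_face_gap hF dF cF mF cd dm'.
have db : e d b by rewrite e_sym.
have /andP[fb _] : p f <= p b <= p f' by apply: (chord_nested ff' db); rewrite fd df'.
by move: (leq_trans cf fb); rewrite leqNgt bc.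
Qed.

Lemma inner_faceE F : inner_face e p F = (F \in triangles e).
Proof.
apply/idP/idP => [hF | ]; last rewrite inE => /andP[/eqP F3 /forall_inP adj].
  have F3 := inner_face_card hF; rewrite inE F3 eqxx /=.
  apply/forall_inP => u uF; apply/forall_inP => v vF; apply/implyP => uv.
  by rewrite (inner_face_edgeE hF uF vF uv) consec_card3.
rewrite /inner_face F3 /=; apply/forall_inP => u uF; apply/forall_inP => v vF.
apply/implyP => uv; rewrite consec_card3 //.
by move/forall_inP/(_ v vF)/implyP/(_ uv): (adj u uF) => ->.
Qed.

Lemma triangle_third F u v : F \in triangles e -> u \in F -> v \in F -> u != v ->
  exists w, [/\ F = [set u; v; w], e u w & e v w].
Proof.
rewrite inE => /andP[/eqP F3 /forall_inP adj] uF vF uv.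
have /card_gt0P[w] : 0 < #|F :\ u :\ v|.
  by move: (cardsD1 u F) (cardsD1 v (F :\ u)); rewrite uF !inE eq_sym uv vF; lia.
rewrite !inE => /and3P[wv wu wF].
have adjF x y : x \in F -> y \in F -> x != y -> e x y.
  by move=> xF yF xy; move/forall_inP/(_ y yF)/implyP/(_ xy): (adj x xF).
by exists w; rewrite (card3_set3 F3 uF vF wF) // 1?eq_sym // !adjF // eq_sym.
Qed.

Definition other_triangles X u v : {set {set T}} :=
  [set Y in triangles e | [&& Y != X, u \in Y & v \in Y]].

Lemma mem_other_triangles X u v Y : (Y \in other_triangles X u v) =
  [&& Y \in triangles e, Y != X, u \in Y & v \in Y].
Proof. exact: in_set. Qed.

Lemma card_other_triangles u v t : e u v -> e u t -> e v t ->
  #|other_triangles [set u; v; t] u v| = inner_edge e u v.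
Proof.
move=> uv ut vt.
have otherP Y : reflect (exists2 w, w != t & [/\ e u w, e v w & Y = [set u; v; w]])
    (Y \in other_triangles [set u; v; t] u v).
  apply: (iffP idP) => [|[w wt [uw vw ->]]].
    rewrite mem_other_triangles => /and4P[YT Yuvt uY vY].
    have [w [YE uw vw]] := triangle_third YT uY vY (edge_neq uv).
    by exists w => //; apply: contraNneq Yuvt => wt; rewrite YE wt.
  rewrite mem_other_triangles mem_triangles3 // uv uw vw !edge_neq //= !inE !eqxx orbT andbT.
  apply: contra_neq wt => /setP/(_ t); rewrite !inE eqxx orbT -!orbA.
  by case/or3P => /eqP // t_eq; [move: ut | move: vt]; rewrite -t_eq e_irr.
have [iuv | niuv] := boolP (inner_edge e u v).
  have [w [wt uw vw]] := inner_edge_other t iuv.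
  apply/eqP/cards1P; exists [set u; v; w]; apply/setP => Y; rewrite in_set1.
  apply/otherP/eqP => [[w' w't [uw' vw' ->]] | ->]; last by exists w.
  have [-> // | w'w] := eqVneq w' w; exfalso.
  by apply: (no_three_common_neighbours uv ut vt uw vw uw' vw'); rewrite eq_sym.
apply/eqP; rewrite cards_eq0; apply/eqP/setP => Y; rewrite in_set0.
apply/otherP => -[w wt [uw vw _]]; case/negP: niuv.
rewrite /inner_edge uv; apply/existsP; exists t; apply/existsP; exists w.
by rewrite eq_sym wt ut vt uw vw.
Qed.

Lemma dual_adj_triangles X Y : X \in triangles e -> Y \in triangles e ->
  dual_adj e p X Y =
  (X != Y) && [exists u, exists v, [&& u != v, u \in X, v \in X, u \in Y & v \in Y]].
Proof.
move=> XT YT; congr (_ && _); apply: eq_existsb => u; apply: eq_existsb => v.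
have [/and5P[uv uX vX uY vY] | nuv] := boolP [&& u != v, u \in X, v \in X, u \in Y & v \in Y].
  have [X3 Y3] : #|X| = 3 /\ #|Y| = 3.
    by move: XT YT; rewrite !inE => /andP[/eqP -> _] /andP[/eqP -> _].
  rewrite uv uX vX uY vY !consec_card3 //= andbT.
  by move: XT; rewrite inE => /andP[_ /forall_inP/(_ u uX)/forall_inP/(_ v vX)/implyP->].
by apply: contraNF nuv => /and5P[-> _ -> -> /and4P[-> -> _ _]].
Qed.

Lemma almost_dual_neighboursE a b c : [set a; b; c] \in triangles e ->
  [set Y | inner_face e p Y & dual_adj e p [set a; b; c] Y] =
  other_triangles [set a; b; c] a b :|: other_triangles [set a; b; c] b c :|:
  other_triangles [set a; b; c] a c.
Proof.
move=> FT; have := FT; rewrite mem_triangles3 // => /andP[/and3P[ab bc ac] _].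
apply/setP => Y; rewrite !in_setU -orbA !mem_other_triangles in_set inner_faceE.
have [YT|] := boolP (Y \in triangles e) => //=.
rewrite dual_adj_triangles // eq_sym; case: (Y != _) => //=.
apply/existsP/idP => [[u /existsP[v /and5P[uv uF vF uY vY]]] | ].
  move: uF vF uY vY uv; rewrite !inE -!orbA => /or3P[]/eqP-> /or3P[]/eqP->;
  by rewrite ?eqxx //= => -> -> _; rewrite /= ?orbT.
case/or3P => /andP[xY yY]; [exists a; apply/existsP; exists b |
  exists b; apply/existsP; exists c | exists a; apply/existsP; exists c];
  by rewrite !inE ?eqxx ?orbT ?xY ?yY ?ab ?bc ?ac.
Qed.

Lemma almost_dual_degree3 a b c : [set a; b; c] \in triangles e ->
  almost_dual_degree e p [set a; b; c] =
  inner_edge e a b + inner_edge e b c + inner_edge e a c.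
Proof.
move=> FT; have := FT; rewrite mem_triangles3 // => /andP[/and3P[ab bc ac] /and3P[eab ebc eac]].
have [eba ecb eca] : [/\ e b a, e c b & e c a] by rewrite !(e_sym _ a) (e_sym c b).
have no3 Y : Y \in triangles e -> Y != [set a; b; c] -> ~~ [&& a \in Y, b \in Y & c \in Y].
  move=> YT; apply: contra => /and3P[aY bY cY].
  have Y3 : #|Y| = 3 by move: YT; rewrite inE => /andP[/eqP].
  by rewrite (card3_set3 Y3 aY bY cY).
have cardU (A B : {set {set T}}) :
    (forall Y, Y \in A -> Y \in B -> False) -> #|A :|: B| = #|A| + #|B|.
  move=> AB; apply/eqP; rewrite (leq_card_setU A B).2 disjoints_subset.
  by apply/subsetP => Y YA; rewrite inE; apply/negP; apply: AB.
have Oab : #|other_triangles [set a; b; c] a b| = inner_edge e a b.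
  exact: card_other_triangles.
have Obc : #|other_triangles [set a; b; c] b c| = inner_edge e b c.
  by rewrite set3C12 set3C23 card_other_triangles.
have Oac : #|other_triangles [set a; b; c] a c| = inner_edge e a c.
  by rewrite set3C23 card_other_triangles.
rewrite /almost_dual_degree almost_dual_neighboursE // !cardU ?Oab ?Obc ?Oac //.
  move=> Y; rewrite !mem_other_triangles => /and4P[YT YF aY bY] /and4P[_ _ _ cY].
  by case/negP: (no3 Y YT YF); rewrite aY bY cY.
move=> Y; rewrite in_setU !mem_other_triangles.
move=> /orP[] /and4P[YT YF uY vY] /and4P[_ _ u'Y v'Y]; case/negP: (no3 Y YT YF);
  by rewrite ?uY ?vY ?u'Y ?v'Y.
Qed.

Lemma almost_dual_deg3E : almost_dual_deg3 e p = triangles (inner_edge e).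
Proof.
apply/setP => F; rewrite inE inner_faceE.
have [FT|nFT] := boolP (F \in triangles e); last first.
  by apply/esym/negbTE; apply: contra nFT; apply/subsetP/triangles_mono => u v /andP[].
move/(trianglesP e_sym): (FT) => [a [b [c [FE /andP[abc _]]]]]; subst F.
rewrite /= almost_dual_degree3 // mem_triangles3 ?abc //=; last exact: inner_edge_sym.
by case: (inner_edge e a b); case: (inner_edge e b c); case: (inner_edge e a c).
Qed.

End MaximalOuterplanar.

Theorem lemma4p10 (T : finType) (e : rel T) (p : T -> nat) :
  simple_graph e -> maximal_outerplanar e -> outerplanar_emb e p ->
  #|central_sets e| = #|triangles (reduced_rel e)| /\
  #|triangles (reduced_rel e)| = #|almost_dual_deg3 e p|.
Proof.
move=> [e_sym e_irr] [_ e_max] [p_inj p_noncross].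
rewrite (central_setsE e_sym e_irr p_inj p_noncross).
rewrite (reduced_trianglesE e_sym e_irr p_inj p_noncross).
by rewrite (almost_dual_deg3E e_sym e_irr p_inj p_noncross e_max).
Qed.
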